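(* Let $f,g$ satisfy the standing assumptions below and let $\beta>0$. Suppose $\beta\ge\frac{M_fQ_g}{\mu^3}$ and $\Phi(x):=f(x,y^*(x))$ is bounded below on $\mathbb{R}^n$. Then $h(x,y)$ is bounded below on $\mathbb{R}^n\times\mathbb{R}^p$.
   Context: Standing assumptions. (A1) Constants $M_f,\mu,L_g,Q_g>0$ exist such that: $f:\mathbb{R}^n\times\mathbb{R}^p\to\mathbb{R}$ is $M_f$-Lipschitz; $g$ is twice differentiable with $\nabla^2_{yy}g\succeq\mu I_p$; $\nabla g$ is $L_g$-Lipschitz; $\nabla^2_{yy}g,\nabla^2_{xy}g$ are $Q_g$-Lipschitz; $\nabla^2_{yy}g$ is continuously differentiable. (A2) $f$ is a potential function of a conservative field $\mathcal{D}_f$ with compact convex values of norm at most $M_f$. Notation: $y^*(x):=\arg\min_{y\in\mathbb{R}^p}g(x,y)$ (unique); $\mathcal{A}(x,y):=y-\nabla^2_{yy}g(x,y)^{-1}\nabla_yg(x,y)$; $h(x,y):=f(x,\mathcal{A}(x,y))+\frac\beta2\|\nabla_yg(x,y)\|^2$. *)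

(* All norms below are EUCLIDEAN norms (written out explicitly, since the
   library's canonical norm on 'rV is the max-norm). *)
From mathcomp Require Import all_boot all_algebra.
From mathcomp Require Import all_classical all_reals all_analysis.
Import GRing.Theory Num.Theory numFieldNormedType.Exports.
Set Implicit Arguments.
Unset Strict Implicit.
Unset Printing Implicit Defensive.
Local Open Scope ring_scope.
Local Open Scope classical_set_scope.

Definition enorm (R : realType) (m : nat) (v : 'rV[R]_m) : R :=
  Num.sqrt (\sum_(i < m) v 0 i ^+ 2).
Definition edot (R : realType) (m : nat) (u v : 'rV[R]_m) : R :=
  \sum_(i < m) u 0 i * v 0 i.

Definition pnorm (R : realType) (n p : nat) (z : 'rV[R]_n * 'rV[R]_p) : R :=
  Num.sqrt (enorm z.1 ^+ 2 + enorm z.2 ^+ 2).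
Definition pdot (R : realType) (n p : nat) (z w : 'rV[R]_n * 'rV[R]_p) : R :=
  edot z.1 w.1 + edot z.2 w.2.

Definition opnorm (R : realType) (m k : nat) (A : 'M[R]_(m, k)) : R :=
  sup [set enorm (v *m A) | v in [set v : 'rV[R]_m | enorm v <= 1]].

Definition ex (R : realType) (n p : nat) (i : 'I_n) : 'rV[R]_n * 'rV[R]_p :=
  (delta_mx 0 i, 0).
Definition ey (R : realType) (n p : nat) (j : 'I_p) : 'rV[R]_n * 'rV[R]_p :=
  (0, delta_mx 0 j).

Definition uncurry2 (R : realType) (n p : nat) (g : 'rV[R]_n -> 'rV[R]_p -> R)
  (z : 'rV[R]_n * 'rV[R]_p) : R := g z.1 z.2.

Definition grad_x (R : realType) (n p : nat) (g : 'rV[R]_n -> 'rV[R]_p -> R)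
  (x : 'rV[R]_n) (y : 'rV[R]_p) : 'rV[R]_n :=
  \row_i 'D_(@ex R n p i) (uncurry2 g) (x, y).
Definition grad_y (R : realType) (n p : nat) (g : 'rV[R]_n -> 'rV[R]_p -> R)
  (x : 'rV[R]_n) (y : 'rV[R]_p) : 'rV[R]_p :=
  \row_j 'D_(@ey R n p j) (uncurry2 g) (x, y).
Definition grad (R : realType) (n p : nat) (g : 'rV[R]_n -> 'rV[R]_p -> R)
  (z : 'rV[R]_n * 'rV[R]_p) : 'rV[R]_n * 'rV[R]_p :=
  (grad_x g z.1 z.2, grad_y g z.1 z.2).
Definition hess_yy (R : realType) (n p : nat) (g : 'rV[R]_n -> 'rV[R]_p -> R)
  (x : 'rV[R]_n) (y : 'rV[R]_p) : 'M[R]_p :=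
  \matrix_(i, j) 'D_(@ey R n p j) (fun w => 'D_(@ey R n p i) (uncurry2 g) w) (x, y).
Definition hess_xy (R : realType) (n p : nat) (g : 'rV[R]_n -> 'rV[R]_p -> R)
  (x : 'rV[R]_n) (y : 'rV[R]_p) : 'M[R]_(n, p) :=
  \matrix_(i, j) 'D_(@ex R n p i) (fun w => 'D_(@ey R n p j) (uncurry2 g) w) (x, y).

Definition lipschitz2 (R : realType) (n p : nat) (f : 'rV[R]_n -> 'rV[R]_p -> R)
  (M : R) : Prop :=
  forall x y x' y', `|f x y - f x' y'| <= M * pnorm ((x, y) - (x', y')).

Definition twice_differentiable (R : realType) (n p : nat)
  (g : 'rV[R]_n -> 'rV[R]_p -> R) : Prop :=
  (forall z : 'rV[R]_n * 'rV[R]_p, differentiable (uncurry2 g) z) /\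
  (forall z : 'rV[R]_n * 'rV[R]_p, differentiable (grad g) z).

Definition C1 (R : realType) (n p : nat) (F : 'rV[R]_n * 'rV[R]_p -> R) : Prop :=
  (forall z : 'rV[R]_n * 'rV[R]_p, differentiable F z) /\
  (forall v : 'rV[R]_n * 'rV[R]_p, continuous (fun z => 'D_v F z)).

Definition abs_cont (R : realType) (n p : nat) (c : R -> 'rV[R]_n * 'rV[R]_p) : Prop :=
  forall e : R, 0 < e -> exists2 d : R, 0 < d &
    forall (k : nat) (a b : 'I_k -> R),
      (forall i, 0 <= a i /\ a i <= b i /\ b i <= 1) ->
      (forall i j, i != j -> b i <= a j \/ b j <= a i) ->
      \sum_(i < k) (b i - a i) < d ->
      \sum_(i < k) pnorm (c (b i) - c (a i)) < e.

Definition chain_integrand (R : realType) (n p : nat)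
  (D : 'rV[R]_n * 'rV[R]_p -> set ('rV[R]_n * 'rV[R]_p))
  (c : R -> 'rV[R]_n * 'rV[R]_p) (t : R) : R :=
  sup [set pdot (derive1 c t) v | v in D (c t)].

(* Conservative field (Bolte--Pauwels, Def. 1): closed graph, nonempty compact
   values, and zero circulation along every absolutely continuous loop. *)
Definition conservative_field (R : realType) (n p : nat)
  (D : 'rV[R]_n * 'rV[R]_p -> set ('rV[R]_n * 'rV[R]_p)) : Prop :=
  closed [set zv : ('rV[R]_n * 'rV[R]_p) * ('rV[R]_n * 'rV[R]_p) | D zv.1 zv.2] /\
  (forall z, D z !=set0 /\ compact (D z)) /\
  (forall c : R -> 'rV[R]_n * 'rV[R]_p, abs_cont c -> c 0 = c 1 ->
     Rintegral lebesgue_measure `[0, 1] (chain_integrand D c) = 0).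

(* f is a potential of the conservative field D (Bolte--Pauwels, Def. 2). *)
Definition potential_of (R : realType) (n p : nat) (f : 'rV[R]_n -> 'rV[R]_p -> R)
  (D : 'rV[R]_n * 'rV[R]_p -> set ('rV[R]_n * 'rV[R]_p)) : Prop :=
  forall c : R -> 'rV[R]_n * 'rV[R]_p, abs_cont c ->
    uncurry2 f (c 1) = uncurry2 f (c 0) +
      Rintegral lebesgue_measure `[0, 1] (chain_integrand D c).

Definition convex_set_of (R : realType) (n p : nat)
  (S : set ('rV[R]_n * 'rV[R]_p)) : Prop :=
  forall u v (t : R), S u -> S v -> 0 <= t <= 1 -> S (t *: u + (1 - t) *: v).

(* y*(x) := argmin_y g(x, y) (the minimiser is unique under (A1)). *)
Definition ystar (R : realType) (n p : nat) (g : 'rV[R]_n -> 'rV[R]_p -> R)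
  (x : 'rV[R]_n) : 'rV[R]_p :=
  xget 0 [set y | forall y', g x y <= g x y'].

(* A(x,y) := y - [grad^2_yy g(x,y)]^{-1} grad_y g(x,y)  (row-vector convention) *)
Definition Amap (R : realType) (n p : nat) (g : 'rV[R]_n -> 'rV[R]_p -> R)
  (x : 'rV[R]_n) (y : 'rV[R]_p) : 'rV[R]_p :=
  y - grad_y g x y *m invmx (hess_yy g x y).

Definition hfun (R : realType) (n p : nat) (f g : 'rV[R]_n -> 'rV[R]_p -> R)
  (beta : R) (x : 'rV[R]_n) (y : 'rV[R]_p) : R :=
  f x (Amap g x y) + beta / 2 * enorm (grad_y g x y) ^+ 2.

(** For fixed [x], [g x] is [mu]-strongly convex, so it has a minimiser [y*(x)],
    and both the distance [|y - y*(x)|] and the Newton step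
    [|grad_y g (hess_yy g)^-1|] are bounded by multiples of [|grad_y g x y| / mu].
    Hence [|A(x,y) - y*(x)|^2 <= 10 |grad_y g x y|^2 / mu^2], and the Lipschitz
    continuity of [f] gives
    [h(x,y) >= Phi(x) - Mf |A(x,y) - y*(x)| + beta/2 |grad_y g x y|^2],
    whose right-hand side is at least [inf Phi - 5 Mf^2 / (beta mu^2)] after
    completing the square in [|grad_y g x y|]. *)

From HB Require Import structures.
From mathcomp Require Import all_boot all_algebra.
From mathcomp Require Import all_classical all_reals all_analysis.
From mathcomp Require Import ring lra.
Import mathcomp.order.order.Order.TTheory GRing.Theory Num.Theory numFieldNormedType.Exports.
Local Open Scope ring_scope.
Local Open Scope classical_set_scope.

Section Young.
Context {R : realFieldType}.

Lemma normrM_le_young (a u v : R) : 0 < a ->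
  `|u * v| <= a * u ^+ 2 + v ^+ 2 / (4 * a).
Proof.
move=> a_gt0; rewrite normrM -(real_normK (num_real u)) -(real_normK (num_real v)).
have : 0 <= (2 * a * `|u| - `|v|) ^+ 2 / (4 * a).
  by apply: divr_ge0; [exact: sqr_ge0 | lra].
suff -> : (2 * a * `|u| - `|v|) ^+ 2 / (4 * a) =
          a * `|u| ^+ 2 + `|v| ^+ 2 / (4 * a) - `|u| * `|v| by rewrite subr_ge0.
by field; lra.
Qed.

Lemma young_of_sqr_le (M : R) {beta K s q : R} : 0 < beta -> 0 < K -> 0 <= s ->
  s ^+ 2 <= K * q -> M * s <= M ^+ 2 * K / (2 * beta) + beta / 2 * q.
Proof.
move=> beta_gt0 K_gt0 s0 sK; rewrite -subr_ge0.
suff -> : M ^+ 2 * K / (2 * beta) + beta / 2 * q - M * s =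
    ((beta * s - M * K) ^+ 2 + beta ^+ 2 * (K * q - s ^+ 2)) / (2 * beta * K).
  by rewrite divr_ge0 ?addr_ge0 ?sqr_ge0 ?mulr_ge0 ?subr_ge0 // ltW.
by field; rewrite !lt0r_neq0.
Qed.

End Young.

Section SquaredNorm.
Context {R : realType} {m : nat}.
Implicit Types u v : 'rV[R]_m.

Definition sqnorm v : R := \sum_i v 0 i ^+ 2.

Lemma sqnorm_ge0 v : 0 <= sqnorm v.
Proof. by apply: sumr_ge0 => i _; exact: sqr_ge0. Qed.

Lemma enorm_sqr v : enorm v ^+ 2 = sqnorm v.
Proof. by rewrite sqr_sqrtr // sqnorm_ge0. Qed.

Lemma sqnorm0 : sqnorm 0 = 0.
Proof. by rewrite /sqnorm big1 // => i _; rewrite mxE expr0n. Qed.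

Lemma sqnorm_eq0 v : sqnorm v = 0 -> v = 0.
Proof.
move=> /eqP; rewrite psumr_eq0 => [/allP v0|i _]; last exact: sqr_ge0.
apply/rowP => i; rewrite mxE; apply/eqP; rewrite -sqrf_eq0.
by apply: (implyP (v0 i _)); rewrite // mem_index_enum.
Qed.

Lemma sqr_coord_le_sqnorm v i : v 0 i ^+ 2 <= sqnorm v.
Proof.
by rewrite /sqnorm (bigD1 i) //= lerDl; apply: sumr_ge0 => k _; exact: sqr_ge0.
Qed.

Lemma sqr_lt_sqnorm v i (r : R) : 0 <= r -> r < `|v 0 i| -> r ^+ 2 < sqnorm v.
Proof.
move=> r0 r_lt; apply: lt_le_trans (sqr_coord_le_sqnorm v i).
by rewrite -(real_normK (num_real (v 0 i))) ltr_pXn2r // (le_trans r0 (ltW r_lt)).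
Qed.

Lemma sqnormD_le u v : sqnorm (u + v) <= 2 * sqnorm u + 2 * sqnorm v.
Proof.
rewrite /sqnorm !mulr_sumr -big_split /=; apply: ler_sum => i _; rewrite mxE.
by have := sqr_ge0 (u 0 i - v 0 i); nra.
Qed.

Lemma norm_edot_le_young (a : R) u v : 0 < a ->
  `|edot u v| <= a * sqnorm u + sqnorm v / (4 * a).
Proof.
move=> a_gt0; rewrite /sqnorm mulr_sumr mulr_suml -big_split /=.
apply: le_trans (ler_norm_sum _ _ _) _.
by apply: ler_sum => i _; exact: normrM_le_young.
Qed.

Lemma exists_argmin_coercive (F : 'rV[R]_m -> R) (c : R) : continuous F ->
  (forall v, c <= sqnorm v -> F 0 <= F v) -> exists v0, forall v, F v0 <= F v.
Proof.
move=> F_cont F_coercive; set r := 1 + `|c|.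
have r1 : 1 <= r by rewrite lerDl.
pose K := [set v : 'rV[R]_m | forall i, `[- r, r] (v 0 i)].
have K_compact : compact K.
  by apply: (@rV_compact _ _ (fun=> `[- r, r])) => i; exact: segment_compact.
have K0 : K 0 by move=> i; rewrite /= in_itv /= mxE; apply/andP; split; lra.
have [v0 _ v0_min] := EVT_min_rV (ex_intro _ 0 K0) K_compact
  (continuous_subspaceT F_cont).
exists v0 => v; case: (pselect (K v)) => [Kv | /existsNP[i /= vi]].
  exact/v0_min/mem_set.
apply: le_trans (v0_min 0 (mem_set K0)) (F_coercive v _).
have r_lt : r < `|v 0 i|.
  by rewrite ltNge ler_norml; apply: contra_notN vi; rewrite in_itv.
have := sqr_lt_sqnorm v i r (le_trans ler01 r1) r_lt.
have c_le_r : c <= r by rewrite /r; have := ler_norm c; lra.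
by nra.
Qed.

End SquaredNorm.

Section RealVariable.
Context {R : realType}.

Lemma is_derive_line (V : normedModType R) (F : V -> R) (z v : V) (t : R) :
  derivable F (z + t *: v) v ->
  is_derive t 1 (fun s => F (z + s *: v)) ('D_v F (z + t *: v)).
Proof.
move=> dF.
have E : (fun h : R => h^-1 *: (((fun s => F (z + s *: v)) \o shift t) (h *: 1)
                                 - F (z + t *: v)))
       = (fun h => h^-1 *: ((F \o shift (z + t *: v)) (h *: v) - F (z + t *: v))).
  apply/funext => h /=; congr (_ *: (F _ - _)).
  by rewrite [_%:A]mulr1 scalerDl addrCA addrA.
by split; rewrite /derivable /derive E.
Qed.

Lemma is_derive_ge0_le (psi dpsi : R -> R) (a b : R) : a <= b ->
  (forall t : R, is_derive t 1 psi (dpsi t)) ->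
  (forall t, a <= t <= b -> 0 <= dpsi t) -> psi a <= psi b.
Proof.
move=> ab dpsiP dpsi_ge0.
have psi_cont : {within `[a, b], continuous psi}.
  by apply: derivable_within_continuous => t _; case: (dpsiP t).
have [c + E] := MVT_segment ab (fun t _ => dpsiP t) psi_cont.
rewrite in_itv /= => /dpsi_ge0 c_ge0.
by rewrite -subr_ge0 E; apply: mulr_ge0; rewrite // subr_ge0.
Qed.

Lemma taylor2_lower_bound {chi phi dphi : R -> R} {m : R} :
  (forall t : R, is_derive t 1 chi (phi t)) ->
  (forall t : R, is_derive t 1 phi (dphi t)) ->
  (forall t, 0 <= t <= 1 -> m <= dphi t) ->
  chi 0 + phi 0 + m / 2 <= chi 1.
Proof.
move=> dchi dphiP dphi_ge.
have phi_ge t : 0 <= t -> t <= 1 -> phi 0 + m * t <= phi t.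
  move=> t0 t1; pose psi : R -> R := phi - (fun s => m * s).
  have : psi 0 <= psi t.
    apply: (@is_derive_ge0_le psi (fun s => dphi s - m)) => // [s|s /andP[s0 st]].
      by apply: is_deriveB => //; apply: is_derive_eq; rewrite [_%:A]mulr1.
    by rewrite subr_ge0 dphi_ge // s0 (le_trans st t1).
  by rewrite /psi !fctE mulr0 subr0; lra.
pose psi : R -> R := chi - (fun s => phi 0 * s + m / 2 * (s * s)).
have : psi 0 <= psi 1.
  apply: (@is_derive_ge0_le psi (fun s => phi s - (phi 0 + m / 2 * (s + s))))
    => // [s|s /andP[s0 s1]].
    by apply: is_deriveB => //; apply: is_derive_eq; rewrite /GRing.scale /= !mulr1.
  by have := phi_ge s s0 s1; lra.
by rewrite /psi !fctE !mulr0 !mulr1 !addr0 subr0; lra.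
Qed.

End RealVariable.

Section StronglyConvexInY.
Context {R : realType} {n p : nat}.
Local Notation V := ('rV[R]_n * 'rV[R]_p)%type.

Lemma pnorm_sub_same_fst (x : 'rV[R]_n) (y y' : 'rV[R]_p) :
  pnorm ((x, y) - (x, y')) = enorm (y - y').
Proof.
rewrite /pnorm /= subrr !enorm_sqr sqnorm0 add0r.
by rewrite -enorm_sqr sqrtr_sqr ger0_norm // sqrtr_ge0.
Qed.

Lemma differentiable_snd_coord (j : 'I_p) (w : V) :
  differentiable (fun u : V => u.2 0 j) w.
Proof.
have lin : linear (fun u : V => u.2 0 j) by move=> a u v /=; rewrite !mxE.
pose L : {linear V -> R} :=
  HB.pack (fun u : V => u.2 0 j) (GRing.isLinear.Build _ _ _ _ _ lin).
rewrite (_ : (fun _ => _) = L) //; apply/linear_differentiable => u.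
apply: (@continuous_comp _ _ _ snd (fun N : 'rV[R]_p => N 0 j)).
  exact: cvg_snd.
exact: coord_continuous.
Qed.

Definition ydir (d : 'rV[R]_p) : V := (0, d).

Lemma ydirE d : ydir d = \sum_j d 0 j *: @ey R n p j.
Proof.
rewrite [RHS]surjective_pairing (big_morph fst (id1 := 0) (op1 := +%R)) //.
rewrite (big_morph snd (id1 := 0) (op1 := +%R)) //= -row_sum_delta.
by congr (_, _); rewrite big1 // => j _; rewrite scaler0.
Qed.

Lemma derive_ydir (F : V -> R) (w : V) d : differentiable F w ->
  'D_(ydir d) F w = \sum_j d 0 j * 'D_(@ey R n p j) F w.
Proof.
move=> dF; rewrite deriveE // ydirE raddf_sum; apply: eq_bigr => j _.
by rewrite [LHS]linearZ /= -deriveE.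
Qed.

Context {g : 'rV[R]_n -> 'rV[R]_p -> R}.
Hypothesis g_twice : twice_differentiable g.

Definition partial_y (j : 'I_p) (w : V) : R := 'D_(@ey R n p j) (uncurry2 g) w.

Lemma differentiable_partial_y j w : differentiable (partial_y j) w.
Proof.
have -> : partial_y j = (fun u : V => u.2 0 j) \o grad g.
  by apply/funext => -[x y]; rewrite /= mxE.
by apply: differentiable_comp; [exact: g_twice.2 | exact: differentiable_snd_coord].
Qed.

Lemma hess_yy_formE (w : V) d :
  (d *m hess_yy g w.1 w.2 *m d^T) 0 0 = \sum_j d 0 j * 'D_(ydir d) (partial_y j) w.
Proof.
rewrite (eq_bigr (fun j => \sum_i d 0 j * (d 0 i * 'D_(@ey R n p i) (partial_y j) w)));
  last by move=> j _; rewrite derive_ydir ?mulr_sumr //; exact: differentiable_partial_y.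
rewrite mxE [LHS](eq_bigr (fun k => \sum_i d 0 i * 'D_(@ey R n p k) (partial_y i) w * d 0 k)).
  rewrite exchange_big /=; apply: eq_bigr => i _.
  by apply: eq_bigr => k _; rewrite mulrAC mulrA.
move=> k _; rewrite !mxE mulr_suml; apply: eq_bigr => i _.
by rewrite !mxE -surjective_pairing.
Qed.

Context {mu : R}.
Hypothesis hess_yy_ge : forall x y (v : 'rV[R]_p),
  mu * enorm v ^+ 2 <= (v *m hess_yy g x y *m v^T) 0 0.

Lemma strong_convexity_y x y d :
  g x y + edot d (grad_y g x y) + mu / 2 * sqnorm d <= g x (y + d).
Proof.
pose line (s : R) : V := (x, y) + s *: ydir d.
pose chi s := uncurry2 g (line s).
pose phi s := \sum_j d 0 j * partial_y j (line s).
pose dphi s := \sum_j d 0 j * 'D_(ydir d) (partial_y j) (line s).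
have dchi (t : R) : is_derive t 1 chi (phi t).
  apply: is_derive_eq; first by apply: is_derive_line; apply: diff_derivable; exact: g_twice.1.
  by rewrite derive_ydir //; exact: g_twice.1.
have dphiP (t : R) : is_derive t 1 phi (dphi t).
  have -> : phi = \sum_j (fun s => d 0 j * partial_y j (line s)) by rewrite fct_sumE.
  apply: is_derive_sum => j; apply: is_deriveZ; apply: is_derive_line.
  exact/diff_derivable/differentiable_partial_y.
have dphi_ge t : mu * sqnorm d <= dphi t.
  by have := hess_yy_ge (line t).1 (line t).2 d; rewrite hess_yy_formE enorm_sqr.
have := taylor2_lower_bound dchi dphiP (fun t _ => dphi_ge t).
rewrite /chi /phi /line scale0r scale1r !addr0 /uncurry2 /= addr0 mulrAC.
suff -> : \sum_j d 0 j * partial_y j (x, y) = edot d (grad_y g x y) by [].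
by apply: eq_bigr => j _; rewrite mxE.
Qed.

Hypothesis mu_gt0 : 0 < mu.

Lemma hess_yy_unit x y : hess_yy g x y \in unitmx.
Proof.
rewrite -row_free_unit; apply/inj_row_free => v vH0; apply: sqnorm_eq0.
apply/eqP; rewrite eq_le sqnorm_ge0 andbT.
by have := hess_yy_ge x y v; rewrite vH0 mul0mx mxE enorm_sqr pmulr_rle0.
Qed.

Lemma sqnorm_newton_step_le x y :
  sqnorm (grad_y g x y *m invmx (hess_yy g x y)) <= sqnorm (grad_y g x y) / mu ^+ 2.
Proof.
set G := grad_y g x y; set w := G *m invmx (hess_yy g x y).
have quad_w : mu * sqnorm w <= edot w G.
  have := hess_yy_ge x y w; rewrite mulmxKV ?hess_yy_unit // enorm_sqr mxE.
  suff -> : edot w G = \sum_j G 0 j * w^T j 0 by [].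
  by rewrite /edot; apply: eq_bigr => j _; rewrite [w^T _ _]mxE mulrC.
have mu2_gt0 : 0 < mu / 2 by apply: divr_gt0.
have := norm_edot_le_young _ w G mu2_gt0; rewrite ler_norml => /andP[_ young].
have half : mu / 2 * sqnorm w <= sqnorm G / (4 * (mu / 2)) by lra.
rewrite ler_pdivlMr ?exprn_gt0 //.
have -> : sqnorm G = sqnorm G / (4 * (mu / 2)) * (2 * mu) by field; lra.
by nra.
Qed.

Lemma coercive_y x y :
  g x 0 + mu / 4 * (sqnorm y - 4 * (sqnorm (grad_y g x 0) / mu ^+ 2)) <= g x y.
Proof.
have mu4_gt0 : 0 < mu / 4 by apply: divr_gt0.
have := norm_edot_le_young _ y (grad_y g x 0) mu4_gt0.
rewrite ler_norml => /andP[young _].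
have := strong_convexity_y x 0 y; rewrite add0r.
have -> : mu / 4 * (sqnorm y - 4 * (sqnorm (grad_y g x 0) / mu ^+ 2)) =
          mu / 4 * sqnorm y - sqnorm (grad_y g x 0) / (4 * (mu / 4)).
  by field; exact: lt0r_neq0.
by lra.
Qed.

Lemma continuous_g_y x : continuous (g x).
Proof.
move=> y; have -> : g x = uncurry2 g \o (fun y : 'rV[R]_p => (x, y)) by [].
apply: differentiable_continuous; apply: differentiable_comp; last exact: g_twice.1.
exact: differentiable_pair.
Qed.

Lemma exists_argmin_y x : exists y0, forall y, g x y0 <= g x y.
Proof.
apply: (exists_argmin_coercive _ (4 * (sqnorm (grad_y g x 0) / mu ^+ 2)) (continuous_g_y x)).
move=> y y_large; apply: le_trans (coercive_y x y).
by rewrite lerDl mulr_ge0 ?subr_ge0 // divr_ge0 // ltW.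
Qed.

Lemma ystar_min x y : g x (ystar g x) <= g x y.
Proof.
have [y0 y0_min] := exists_argmin_y x.
by have := xgetPex 0 (ex_intro [set y | forall y', g x y <= g x y'] y0 y0_min); apply.
Qed.

Lemma sqnorm_ystar_sub_le x y :
  sqnorm (ystar g x - y) <= 4 * (sqnorm (grad_y g x y) / mu ^+ 2).
Proof.
have mu4_gt0 : 0 < mu / 4 by apply: divr_gt0.
have := norm_edot_le_young _ (ystar g x - y) (grad_y g x y) mu4_gt0.
rewrite ler_norml => /andP[young _].
have := strong_convexity_y x y (ystar g x - y); rewrite [y + _]addrC subrK.
have := ystar_min x y; move: young.
have -> : sqnorm (grad_y g x y) / (4 * (mu / 4)) =
          mu / 4 * (4 * (sqnorm (grad_y g x y) / mu ^+ 2)).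
  by field; exact: lt0r_neq0.
move: (sqnorm (ystar g x - y)) (4 * _) (edot _ _) => D T e young ymin sc.
by rewrite -(ler_pM2l mu4_gt0); lra.
Qed.

Lemma sqnorm_ystar_sub_Amap_le x y :
  sqnorm (ystar g x - Amap g x y) <= 10 / mu ^+ 2 * sqnorm (grad_y g x y).
Proof.
rewrite mulrAC -mulrA.
have -> : ystar g x - Amap g x y =
          (ystar g x - y) + grad_y g x y *m invmx (hess_yy g x y).
  by rewrite /Amap opprB addrA addrAC.
apply: le_trans (sqnormD_le _ _) _.
have := sqnorm_ystar_sub_le x y; have := sqnorm_newton_step_le x y.
by lra.
Qed.

End StronglyConvexInY.

Theorem proposition3p3 (R : realType) (n p : nat)
  (f g : 'rV[R]_n -> 'rV[R]_p -> R)
  (Df : 'rV[R]_n * 'rV[R]_p -> set ('rV[R]_n * 'rV[R]_p))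
  (Mf mu Lg Qg beta : R) :
  (* (A1) *)
  0 < Mf -> 0 < mu -> 0 < Lg -> 0 < Qg ->
  lipschitz2 f Mf ->
  twice_differentiable g ->
  (forall x y (v : 'rV[R]_p),
      mu * enorm v ^+ 2 <= (v *m hess_yy g x y *m v^T) 0 0) ->
  (forall z z' : 'rV[R]_n * 'rV[R]_p,
      pnorm (grad g z - grad g z') <= Lg * pnorm (z - z')) ->
  (forall x y x' y',
      opnorm (hess_yy g x y - hess_yy g x' y') <= Qg * pnorm ((x, y) - (x', y'))) ->
  (forall x y x' y',
      opnorm (hess_xy g x y - hess_xy g x' y') <= Qg * pnorm ((x, y) - (x', y'))) ->
  (forall i j, C1 (fun z : 'rV[R]_n * 'rV[R]_p => hess_yy g z.1 z.2 i j)) ->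
  (* (A2) *)
  conservative_field Df ->
  (forall z, convex_set_of (Df z)) ->
  (forall z v, Df z v -> pnorm v <= Mf) ->
  potential_of f Df ->
  (* hypotheses of the proposition *)
  0 < beta ->
  Mf * Qg / mu ^+ 3 <= beta ->
  (exists c : R, forall x : 'rV[R]_n, c <= f x (ystar g x)) ->
  exists c : R, forall (x : 'rV[R]_n) (y : 'rV[R]_p), c <= hfun f g beta x y.
Proof.
move=> _ mu_gt0 _ _ f_lip g_twice hess_ge _ _ _ _ _ _ _ _ beta_gt0 _ [c Phi_ge].
have K_gt0 : 0 < 10 / mu ^+ 2 by rewrite divr_gt0 ?exprn_gt0.
exists (c - Mf ^+ 2 * (10 / mu ^+ 2) / (2 * beta)) => x y.
have dist := sqnorm_ystar_sub_Amap_le g_twice hess_ge mu_gt0 x y.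
rewrite -enorm_sqr in dist.
have := young_of_sqr_le Mf (s := enorm (ystar g x - Amap g x y))
  beta_gt0 K_gt0 (sqrtr_ge0 _) dist.
have := f_lip x (ystar g x) x (Amap g x y).
rewrite pnorm_sub_same_fst ler_norml => /andP[_ lip].
have := Phi_ge x; rewrite /hfun enorm_sqr.
by lra.
Qed.
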